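(* Let $G\subset U(V)$ be a finite pseudo reflection group and $\Upsilon$ any admissible parameter set. Then $B_G(\Upsilon)$ is a finite-dimensional $\mathbb C$-algebra, and the linear map $\mathbb CG\to B_G(\Upsilon)$, $w\mapsto T_w$, is an injective algebra homomorphism.
   Context: Let $V$ be a finite-dimensional complex vector space and $G\subset U(V)$ a finite pseudo reflection group (a finite group generated by pseudo reflections, i.e. elements conjugate in $GL(V)$ to $\mathrm{diag}(\xi,1,\dots,1)$ with $\xi\neq1$ a root of unity). Let $R$ be the set of pseudo reflections in $G$ and $\mathcal A=\{H_i\}_{i\in P}$ the set of their reflecting hyperplanes, indexed by a finite set $P$. For $s\in R$ let $i(s)$ be the index with $H_{i(s)}$ the hyperplane fixed pointwise by $s$. $G$ permutes $\mathcal A$; write $w(i)$ for the index with $H_{w(i)}=w(H_i)$ and $i\sim j$ if $j=w(i)$ for some $w\in G$. Put $R(i,j)=\{s\in R: s(H_j)=H_i\}$. For $i\in P$ let $G_i$ be the pointwise stabilizer of $H_i$ in $G$ and $s_i\in G_i$ its unique element with exceptional eigenvalue $e^{2\pi\sqrt{-1}/|G_i|}$. An edge is an intersection of hyperplanes of $\mathcal A$. For $i\ne j$ write $H_i\pitchfork H_j$ if $\{k\in P: H_i\cap H_j\subset H_k\}=\{i,j\}$; a codimension-2 edge $L$ is crossing if $L=H_i\cap H_j$ for some $i,j$ with $H_i\pitchfork H_j$, and noncrossing otherwise. For $w\in G$, $V_w=\{v\in V: wv=v\}$. Admissible parameters $\Upsilon=\{\mu_s,\tau_i\}_{s\in R,i\in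 P}$: $\mu_s\in\mathbb C\setminus\{0\}$ with $\mu_s=\mu_{s'}$ whenever $s,s'$ are conjugate in $G$, and $\tau_i\in\mathbb C$ with $\tau_i=\tau_j$ whenever $i\sim j$. The algebra $B_G(\Upsilon)$ is the unital associative $\mathbb C$-algebra generated by $\{T_w\}_{w\in G}\cup\{e_i\}_{i\in P}$ with $T_1=1$ and relations: (0) $T_{w_1}T_{w_2}=T_{w_1w_2}$; (1) $T_{s_i}e_i=e_iT_{s_i}=e_i$ for $i\in P$; (1') $T_we_i=e_iT_w=e_i$ whenever $w(H_i)=H_i$ and $H_i\cap V_w$ is a noncrossing codimension-2 edge; (2) $e_i^2=\tau_ie_i$; (3) $T_we_j=e_iT_w$ whenever $w(H_j)=H_i$; (4) $e_ie_j=e_je_i$ if $H_i\pitchfork H_j$; (5) $e_ie_j=(\sum_{s\in R(i,j)}\mu_sT_s)e_j=e_i(\sum_{s\in R(i,j)}\mu_sT_s)$ if $i\ne j$, $H_i\cap H_j$ is noncrossing and $R(i,j)\neq\emptyset$; (6) $e_ie_j=0$ if $i\ne j$, $H_i\cap H_j$ is noncrossing and $R(i,j)=\emptyset$. *)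

From HB Require Import structures.
From mathcomp Require Import all_boot all_order all_algebra all_fingroup all_character.
Set Implicit Arguments. Unset Strict Implicit. Unset Printing Implicit Defensive.
Import GRing.Theory Num.Theory.
Local Open Scope ring_scope.

(* Linear algebra on V = C^n.  Vectors are identified with ROW vectors and   *)
(* subspaces of V are row spaces of square matrices (mxalgebra, %MS).        *)
(* A matrix A acts on V as the linear map v |-> A v (column convention),     *)
(* i.e. on row vectors as u |-> u *m A^T; so A ↦ (this map) is a group       *)
(* homomorphism (left action), as for G ⊂ GL(V) in the paper.               *)

Definition is_root_of_unity {C : numClosedFieldType} (x : C) : Prop :=
  exists k : nat, (0 < k)%N /\ x ^+ k = 1.

Definition pseudo_refl {C : numClosedFieldType} {n : nat} (A : 'M[C]_n) : Prop :=
  exists (Pm : 'M[C]_n) (xi : C) (i0 : 'I_n),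
    [/\ Pm \in unitmx, xi != 1, is_root_of_unity xi &
        invmx Pm *m A *m Pm = diag_mx (\row_i (if i == i0 then xi else 1))].

Definition unitary {C : numClosedFieldType} {n : nat} (A : 'M[C]_n) : Prop :=
  A *m (map_mx Num.conj A)^T = 1%:M.

Definition mx_act {C : numClosedFieldType} {n : nat} (A U : 'M[C]_n) : 'M[C]_n :=
  U *m A^T.

Definition fixsp {C : numClosedFieldType} {n : nat} (A : 'M[C]_n) : 'M[C]_n :=
  kermx (A^T - 1%:M).

(* e^{2 pi sqrt(-1) / m} ;  m.-root (-1) = e^{pi sqrt(-1)/m}                *)
Definition zeta_root {C : numClosedFieldType} (m : nat) : C :=
  (m.-root (-1)) ^+ 2.

Section Arrangement.
Variables (C : numClosedFieldType) (n : nat) (P : finType) (H : P -> 'M[C]_n).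

Definition cap2 (i j : P) : 'M[C]_n := (H i :&: H j)%MS.

Definition pitchfork (i j : P) : bool :=
  (i != j) && ([set k | (cap2 i j <= H k)%MS] == [set i; j]).

Definition is_edge (L : 'M[C]_n) : bool :=
  [exists S : {set P}, (L == \bigcap_(k in S) H k)%MS].

Definition codim2 (L : 'M[C]_n) : bool := (\rank L + 2 == n)%N.

Definition crossing_edge (L : 'M[C]_n) : bool :=
  [exists i, exists j, pitchfork i j && (L == cap2 i j)%MS].

Definition noncrossing2 (L : 'M[C]_n) : bool :=
  [&& is_edge L, codim2 L & ~~ crossing_edge L].

End Arrangement.

(* Formal noncommutative polynomials over C in the generators X:           *)
(* finite formal linear combinations of words.                              *)
Section FreeAlg.
Variables (C : numClosedFieldType) (X : eqType).

Definition lincomb := seq (C * seq X).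

Definition lc_coef (f : lincomb) (u : seq X) : C :=
  \sum_(p <- f) (if p.2 == u then p.1 else 0).

Definition lc_add (f g : lincomb) : lincomb := f ++ g.
Definition lc_scale (c : C) (f : lincomb) : lincomb :=
  [seq (c * p.1, p.2) | p <- f].
Definition lc_sub (f g : lincomb) : lincomb := f ++ lc_scale (-1) g.
Definition lc_mul (f g : lincomb) : lincomb :=
  [seq (p.1 * q.1, p.2 ++ q.2) | p <- f, q <- g].
Definition lc_word (u : seq X) : lincomb := [:: (1, u)].
Definition lc_one : lincomb := lc_word [::].
Definition lc_zero : lincomb := [::].

Definition in_ideal (rel : lincomb -> Prop) (f : lincomb) : Prop :=
  exists (m : nat) (c : 'I_m -> C) (u v : 'I_m -> seq X) (r : 'I_m -> lincomb),
    (forall k, rel (r k)) /\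
    forall x : seq X,
      lc_coef f x =
      \sum_(k < m) c k * lc_coef (lc_mul (lc_word (u k)) (lc_mul (r k) (lc_word (v k)))) x.

End FreeAlg.

(* Generators: inl w = T_w (w in G), inr i = e_i (i in P).                  *)
Section BMWRel.
Variables (C : numClosedFieldType) (n : nat) (gT : finGroupType)
  (rho : gT -> 'M[C]_n) (P : finType) (H : P -> 'M[C]_n)
  (Rs : {set gT}) (mu : gT -> C) (tau : P -> C).

Local Notation X := (gT + P)%type.
Local Notation lc := (lincomb C X).

Definition genT (w : gT) : lc := lc_word C [:: inl w].
Definition gene (i : P) : lc := lc_word C [:: inr i].

Definition maps_hyp (w : gT) (j i : P) : bool := (mx_act (rho w) (H j) == H i)%MS.

Definition hyp_equiv (i j : P) : Prop := exists w, maps_hyp w i j.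

Definition Gpt (i : P) : {set gT} := [set w | (H i <= fixsp (rho w))%MS].

Definition is_s (i : P) (s : gT) : bool :=
  [&& s \in Gpt i, s != 1%g & eigenvalue (rho s) (zeta_root #|Gpt i|)].

Definition Rij (i j : P) : {set gT} := [set s in Rs | maps_hyp s j i].

Definition sumR (i j : P) : lc :=
  flatten [seq lc_scale (mu s) (genT s) | s <- enum (Rij i j)].

Definition B_rel (r : lc) : Prop :=
  r = lc_sub (genT 1%g) (lc_one C X)
  \/ (exists w1 w2, r = lc_sub (lc_mul (genT w1) (genT w2)) (genT (w1 * w2)%g))
  \/ (exists i s, is_s i s /\
        (r = lc_sub (lc_mul (genT s) (gene i)) (gene i)
         \/ r = lc_sub (lc_mul (gene i) (genT s)) (gene i)))
  \/ (exists i w, maps_hyp w i i /\ noncrossing2 H (H i :&: fixsp (rho w))%MS /\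
        (r = lc_sub (lc_mul (genT w) (gene i)) (gene i)
         \/ r = lc_sub (lc_mul (gene i) (genT w)) (gene i)))
  \/ (exists i, r = lc_sub (lc_mul (gene i) (gene i)) (lc_scale (tau i) (gene i)))
  \/ (exists w i j, maps_hyp w j i /\
        r = lc_sub (lc_mul (genT w) (gene j)) (lc_mul (gene i) (genT w)))
  \/ (exists i j, pitchfork H i j /\
        r = lc_sub (lc_mul (gene i) (gene j)) (lc_mul (gene j) (gene i)))
  \/ (exists i j, [/\ i != j, noncrossing2 H (cap2 H i j) & Rij i j != set0] /\
        (r = lc_sub (lc_mul (gene i) (gene j)) (lc_mul (sumR i j) (gene j))
         \/ r = lc_sub (lc_mul (gene i) (gene j)) (lc_mul (gene i) (sumR i j))))
  \/ (exists i j, [/\ i != j, noncrossing2 H (cap2 H i j) & Rij i j == set0] /\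
        r = lc_mul (gene i) (gene j)).

Definition B_ideal (f : lc) : Prop := in_ideal B_rel f.

(* B_G(Upsilon) = free algebra / B_ideal is finite-dimensional:            *)
(* finitely many words span the quotient.                                   *)
Definition B_findim : Prop :=
  exists (m : nat) (b : 'I_m -> seq X),
    forall x : seq X, exists c : 'I_m -> C,
      B_ideal (lc_sub (lc_word C x) [seq (c k, b k) | k <- enum 'I_m]).

(* the image of sum_w a_w w under CG -> B_G, w |-> T_w (before quotient) *)
Definition T_image (a : gT -> C) : lc := [seq (a w, [:: inl w]) | w <- enum gT].

End BMWRel.

From HB Require Import structures.
From mathcomp Require Import all_boot all_order all_algebra all_fingroup all_character.
From mathcomp Require Import zify.
Set Implicit Arguments. Unset Strict Implicit. Unset Printing Implicit Defensive.
Import GRing.Theory Num.Theory.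
Local Open Scope ring_scope.

(* A formal combination f = Σ c·u is studied through its evaluations
   Σ c·F(u) against arbitrary functions F on words: f lies in the ideal iff
   it has the evaluations of a finite combination Σ c·(u r v) of sandwiched
   relators (in_idealP).  This yields a congruence on combinations in which
   each defining relation becomes a rewrite rule on words.

   Injectivity: the evaluation that sends a word in the T's alone to the
   indicator of its product in G, and every word containing some e_i to 0,
   annihilates all sandwiched relators (it is the algebra map B_G → CG,
   T_w ↦ w, e_i ↦ 0); it reads off the coefficient a_g of Σ a_w T_w.

   Finite dimension: call S ⊆ P crossing when its hyperplanes cross pairwise.
   The normal words e_S T_w (S crossing, the e_k in a fixed order) absorb
   right multiplication by any letter: T_v by (0); e_j is moved left of T_w
   by (3) as some e_i, and then either i ∈ S (relations (4) and (2)), or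
   some H_m, m ∈ S, does not cross H_i, so that H_m ∩ H_i is a noncrossing
   codimension-2 edge and (5)/(6) apply, or S ∪ {i} is again crossing.  By
   induction every word is congruent to a combination of the finitely many
   normal words. *)

Section FreeAlgebra.
Variables (C : numClosedFieldType) (X : eqType).
Local Notation lc := (lincomb C X).
Local Notation word := (lc_word C).
Implicit Types (F : seq X -> C) (f g : lc) (u v a b : seq X).

Definition lc_eval F f : C := \sum_(p <- f) p.1 * F p.2.

Lemma lc_eval_ext F F' f : F =1 F' -> lc_eval F f = lc_eval F' f.
Proof. by move=> eF; apply: eq_bigr => p _; rewrite eF. Qed.

Lemma lc_eval_nil F : lc_eval F [::] = 0.
Proof. exact: big_nil. Qed.

Lemma lc_eval_cat F f g : lc_eval F (f ++ g) = lc_eval F f + lc_eval F g.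
Proof. exact: big_cat. Qed.

Lemma lc_eval_scale F c f : lc_eval F (lc_scale c f) = c * lc_eval F f.
Proof.
by rewrite /lc_eval big_map mulr_sumr; apply: eq_bigr => p _; rewrite mulrA.
Qed.

Lemma lc_eval_sub F f g : lc_eval F (lc_sub f g) = lc_eval F f - lc_eval F g.
Proof. by rewrite /lc_sub lc_eval_cat lc_eval_scale mulN1r. Qed.

Lemma lc_eval_word F u : lc_eval F (word u) = F u.
Proof. by rewrite /lc_eval big_seq1 mul1r. Qed.

Lemma lc_eval_flatten (T : Type) F (h : T -> lc) (s : seq T) :
  lc_eval F (flatten (map h s)) = \sum_(t <- s) lc_eval F (h t).
Proof.
elim: s => [|t s IH]; first by rewrite big_nil lc_eval_nil.
by rewrite big_cons /= lc_eval_cat IH.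
Qed.

Lemma lc_eval_mul F f g :
  lc_eval F (lc_mul f g) = \sum_(p <- f) p.1 * lc_eval (fun x => F (p.2 ++ x)) g.
Proof.
rewrite /lc_eval /lc_mul big_allpairs_dep; apply: eq_bigr => p _.
by rewrite mulr_sumr; apply: eq_bigr => q _; rewrite mulrA.
Qed.

Lemma lc_eval_mul_words F u v : lc_eval F (lc_mul (word u) (word v)) = F (u ++ v).
Proof. by rewrite lc_eval_mul big_seq1 lc_eval_word mul1r. Qed.

Definition lc_ctx a f b : lc := [seq (p.1, a ++ p.2 ++ b) | p <- f].

Lemma lc_eval_ctx F a f b :
  lc_eval F (lc_ctx a f b) = lc_eval (fun x => F (a ++ x ++ b)) f.
Proof. by rewrite /lc_eval big_map. Qed.

(* How [in_ideal] writes the sandwiched relator a·f·b. *)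
Lemma lc_eval_sandwich F a f b :
  lc_eval F (lc_mul (word a) (lc_mul f (word b))) =
  lc_eval (fun x => F (a ++ x ++ b)) f.
Proof.
rewrite lc_eval_mul big_seq1 mul1r lc_eval_mul; apply: eq_bigr => p _.
by rewrite lc_eval_word.
Qed.

Lemma lc_coef_eval f x : lc_coef f x = lc_eval (fun y => (y == x)%:R) f.
Proof. by apply: eq_bigr => p _; case: eqP; rewrite ?mulr1 ?mulr0. Qed.

Lemma lc_eval_coef F f (S : seq (seq X)) :
  uniq S -> {subset map snd f <= S} ->
  lc_eval F f = \sum_(x <- S) lc_coef f x * F x.
Proof.
move=> uS fS; under eq_bigr => x _ do rewrite /lc_coef mulr_suml.
rewrite exchange_big /lc_eval big_seq [RHS]big_seq; apply: eq_bigr => p pf.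
rewrite (bigD1_seq p.2) ?fS ?map_f //= eqxx big1 ?addr0 // => x /negPf.
by rewrite eq_sym => ->; rewrite mul0r.
Qed.

Lemma lc_eval_lincomb m (c : 'I_m -> C) (h : 'I_m -> lc) f :
  (forall x, lc_coef f x = \sum_(k < m) c k * lc_coef (h k) x) ->
  forall F, lc_eval F f = \sum_(k < m) c k * lc_eval F (h k).
Proof.
move=> ef F; set S := undup (map snd f ++ flatten [seq map snd (h k) | k <- enum 'I_m]).
have uS : uniq S by apply: undup_uniq.
have hS k : {subset map snd (h k) <= S}.
  move=> x xh; rewrite mem_undup mem_cat; apply/orP; right.
  by apply/flattenP; exists (map snd (h k)) => //; apply/mapP; exists k; rewrite ?mem_enum.
rewrite (lc_eval_coef F uS) => [|x xf]; last by rewrite mem_undup mem_cat xf.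
under eq_bigr => x _ do rewrite ef mulr_suml.
rewrite exchange_big; apply: eq_bigr => k _.
rewrite (lc_eval_coef F uS (hS k)) mulr_sumr.
by apply: eq_bigr => x _; rewrite mulrA.
Qed.

End FreeAlgebra.

Section IdealCongruence.
Variables (C : numClosedFieldType) (X : eqType) (rel : lincomb C X -> Prop).
Variable r0 : lincomb C X.
Hypothesis rel_r0 : rel r0.
Local Notation lc := (lincomb C X).
Local Notation word := (lc_word C).
Implicit Types (f g h : lc) (a b : seq X).

(* A term c·(u r v) of a combination of sandwiched relators. *)
Definition ideal_term := (C * seq X * seq X * {r : lc | rel r})%type.

Definition ideal_comb f : Prop :=
  exists l : seq ideal_term, forall F,
    lc_eval F f = \sum_(t <- l)
      t.1.1.1 * lc_eval (fun x => F (t.1.1.2 ++ x ++ t.1.2)) (sval t.2).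

(* Membership in the ideal is a statement about evaluations only; the
   relator r0 pads the empty combination. *)
Lemma in_idealP f : in_ideal rel f <-> ideal_comb f.
Proof.
split=> [[m [c [u [v [r [rel_r ef]]]]]] | [l el]].
  exists [seq (c k, u k, v k, exist _ (r k) (rel_r k)) | k <- enum 'I_m] => F.
  rewrite big_map big_enum (lc_eval_lincomb ef); apply: eq_bigr => k _.
  by rewrite lc_eval_sandwich.
pose d : ideal_term := (0, [::], [::], exist _ r0 rel_r0).
pose t k := nth d l k.
exists (size l), (fun k => (t k).1.1.1), (fun k => (t k).1.1.2), (fun k => (t k).1.2),
  (fun k => sval (t k).2).
split=> [k | x]; first exact: (svalP (t k).2).
rewrite lc_coef_eval el (big_nth d) big_mkord; apply: eq_bigr => k _.
by rewrite lc_coef_eval lc_eval_sandwich.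
Qed.

Lemma ideal_comb_ext f g : (forall F, lc_eval F f = lc_eval F g) ->
  ideal_comb g -> ideal_comb f.
Proof. by move=> efg [l el]; exists l => F; rewrite efg el. Qed.

Lemma ideal_comb_nil : ideal_comb [::].
Proof. by exists [::] => F; rewrite lc_eval_nil big_nil. Qed.

Lemma ideal_comb_cat f g : ideal_comb f -> ideal_comb g -> ideal_comb (f ++ g).
Proof.
by case=> l1 e1 [l2 e2]; exists (l1 ++ l2) => F; rewrite lc_eval_cat big_cat e1 e2.
Qed.

Lemma ideal_comb_scale c f : ideal_comb f -> ideal_comb (lc_scale c f).
Proof.
case=> l el; exists [seq (c * t.1.1.1, t.1.1.2, t.1.2, t.2) | t <- l] => F.
by rewrite lc_eval_scale el big_map mulr_sumr; apply: eq_bigr => t _; rewrite mulrA.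
Qed.

Lemma ideal_comb_ctx a f b : ideal_comb f -> ideal_comb (lc_ctx a f b).
Proof.
case=> l el; exists [seq (t.1.1.1, a ++ t.1.1.2, t.1.2 ++ b, t.2) | t <- l] => F.
rewrite lc_eval_ctx el big_map; apply: eq_bigr => t _ /=.
by congr (_ * _); apply: lc_eval_ext => x; rewrite !catA.
Qed.

Lemma ideal_comb_rel r : rel r -> ideal_comb r.
Proof.
move=> rel_r; exists [:: (1, [::], [::], exist _ r rel_r)] => F.
by rewrite big_seq1 mul1r; apply: lc_eval_ext => x; rewrite cats0.
Qed.

Definition cong f g : Prop := ideal_comb (lc_sub f g).

Lemma cong_ext f g : (forall F, lc_eval F f = lc_eval F g) -> cong f g.
Proof.
by move=> efg; apply: (ideal_comb_ext _ ideal_comb_nil) => F;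
  rewrite lc_eval_sub efg subrr lc_eval_nil.
Qed.

Lemma cong_refl f : cong f f.
Proof. exact: cong_ext. Qed.

Lemma cong_sym f g : cong f g -> cong g f.
Proof.
move=> cfg; apply: (ideal_comb_ext _ (ideal_comb_scale (-1) cfg)) => F.
by rewrite lc_eval_scale !lc_eval_sub mulN1r opprB.
Qed.

Lemma cong_trans g f h : cong f g -> cong g h -> cong f h.
Proof.
move=> cfg cgh; apply: (ideal_comb_ext _ (ideal_comb_cat cfg cgh)) => F.
by rewrite lc_eval_cat !lc_eval_sub addrA subrK.
Qed.

Lemma cong_cat f1 f2 g1 g2 : cong f1 g1 -> cong f2 g2 -> cong (f1 ++ f2) (g1 ++ g2).
Proof.
move=> c1 c2; apply: (ideal_comb_ext _ (ideal_comb_cat c1 c2)) => F.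
by rewrite lc_eval_cat !lc_eval_sub !lc_eval_cat opprD addrACA.
Qed.

Lemma cong_scale c f g : cong f g -> cong (lc_scale c f) (lc_scale c g).
Proof.
move=> cfg; apply: (ideal_comb_ext _ (ideal_comb_scale c cfg)) => F.
by rewrite !lc_eval_scale !lc_eval_sub !lc_eval_scale mulrBr.
Qed.

Lemma cong_ctx a b f g : cong f g -> cong (lc_ctx a f b) (lc_ctx a g b).
Proof.
move=> cfg; apply: (ideal_comb_ext _ (ideal_comb_ctx a b cfg)) => F.
by rewrite !lc_eval_ctx !lc_eval_sub !lc_eval_ctx.
Qed.

Lemma cong_rule a b r f g : rel r ->
  (forall F, lc_eval F r = lc_eval F f - lc_eval F g) ->
  cong (lc_ctx a f b) (lc_ctx a g b).
Proof.
move=> rel_r er; apply: cong_ctx; apply: (ideal_comb_ext _ (ideal_comb_rel rel_r)).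
by move=> F; rewrite lc_eval_sub er.
Qed.

Lemma cong_word_rule a b r u g : rel r ->
  (forall F, lc_eval F r = F u - lc_eval F g) ->
  cong (word (a ++ u ++ b)) (lc_ctx a g b).
Proof.
move=> rel_r er; apply: (@cong_rule a b r (word u) g rel_r) => F.
by rewrite er lc_eval_word.
Qed.

End IdealCongruence.

Section PseudoReflections.
Variables (C : numClosedFieldType) (n : nat).
Implicit Types A B : 'M[C]_n.

Lemma invmx_mul A B : A \in unitmx -> B \in unitmx ->
  invmx (A *m B) = invmx B *m invmx A.
Proof.
move=> uA uB; have uAB : A *m B \in unitmx by rewrite unitmx_mul uA.
apply: (can_inj (mulKmx uAB)).
by rewrite mulmxA mulmxK // mulmxV // mulmxV.
Qed.

(* The image under B of the fixed space of A is fixed by B A B^-1 (vectors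
   are rows, so B acts through B^T). *)
Lemma fixsp_conj_sub A B : B \in unitmx ->
  (fixsp A *m B^T <= fixsp (B *m A *m invmx B))%MS.
Proof.
move=> uB; apply/sub_kermxP.
have fixA : fixsp A *m (A^T - 1%:M) = 0 by rewrite mulmx_ker.
have BBV : B^T *m (invmx B)^T = 1%:M by rewrite -trmx_mul mulVmx // trmx1.
rewrite !trmx_mul mulmxBr mulmx1 !mulmxA -[fixsp A *m B^T *m _]mulmxA BBV mulmx1.
by rewrite -mulmxBl -{2}[fixsp A]mulmx1 -mulmxBr fixA mul0mx.
Qed.

Lemma fixsp_conj A B : B \in unitmx ->
  (fixsp (B *m A *m invmx B) == fixsp A *m B^T)%MS.
Proof.
move=> uB; apply/andP; split; last exact: fixsp_conj_sub.
have uBV : invmx B \in unitmx by rewrite unitmx_inv.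
have := fixsp_conj_sub (B *m A *m invmx B) uBV.
rewrite invmxK !mulmxA mulVmx // mul1mx mulmxKV // => /(submxMr B^T).
by rewrite -[_ *m (invmx B)^T *m B^T]mulmxA -trmx_mul mulmxV // trmx1 mulmx1.
Qed.

Lemma pseudo_refl_conj A B : B \in unitmx -> pseudo_refl A ->
  pseudo_refl (B *m A *m invmx B).
Proof.
move=> uB [Pm [xi [i0 [uP xi1 xi_root e]]]].
exists (B *m Pm), xi, i0; split=> //; first by rewrite unitmx_mul uB.
by rewrite invmx_mul // !mulmxA mulmxKV // mulmxKV.
Qed.

Lemma mxrank_conj A B : B \in unitmx -> \rank (B *m A *m invmx B) = \rank A.
Proof.
move=> uB; rewrite mxrankMfree ?row_free_unit ?unitmx_inv //.
apply/eqP; rewrite eqn_leq mxrankM_maxr /=.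
by rewrite -{1}[A](mulKmx uB) mxrankM_maxr.
Qed.

(* A pseudo reflection fixes a hyperplane: A - 1 is conjugate to a rank one
   matrix (ξ - 1)·E_{i0,i0}. *)
Lemma rank_fixsp_pseudo_refl A : pseudo_refl A -> \rank (fixsp A) = n.-1.
Proof.
move=> [Pm [xi [i0 [uP xi1 _ e]]]].
have diag_sub1 : diag_mx (\row_i (if i == i0 then xi else 1)) - 1%:M =
                 (xi - 1) *: (delta_mx i0 i0 : 'M[C]_n).
  apply/matrixP => i j; rewrite !mxE; case: (eqVneq i j) => [<-|ij].
    by case: (eqVneq i i0); rewrite /= ?mulr1n ?mulr1 ?subrr ?mulr0.
  rewrite mulr0n subr0; have [ii0|_] := eqVneq i i0; last by rewrite mulr0.
  by rewrite -ii0 eq_sym (negPf ij) mulr0.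
have conjA : A - 1%:M = Pm *m (invmx Pm *m A *m Pm - 1%:M) *m invmx Pm.
  by rewrite mulmxBr mulmxBl mulmx1 mulmxV // !mulmxA mulmxV // mul1mx mulmxK.
have trA : A^T - 1%:M = (A - 1%:M)^T by rewrite raddfB /= trmx1.
rewrite /fixsp mxrank_ker trA mxrank_tr conjA mxrank_conj // e diag_sub1.
by rewrite mxrank_scale_nz ?mxrank_delta ?subr_eq0 // subn1.
Qed.

End PseudoReflections.

Section ArrangementFacts.
Variables (C : numClosedFieldType) (n : nat) (P : finType) (H : P -> 'M[C]_n).

Lemma pitchforkC i j : pitchfork H i j = pitchfork H j i.
Proof. by rewrite /pitchfork /cap2 capmxC eq_sym setUC. Qed.

Lemma cap2_edge i j : i != j -> is_edge H (cap2 H i j).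
Proof.
move=> ij; apply/existsP; exists [set i; j].
by rewrite big_setU1 ?inE // big_set1 /cap2 submx_refl.
Qed.

Lemma rank_cap_hyperplanes (U W : 'M[C]_n) :
  \rank U = n.-1 -> \rank W = n.-1 -> ~~ (W <= U)%MS ->
  (\rank (U :&: W)%MS + 2 = n)%N.
Proof.
move=> rU rW nWU.
have /leqifP := mxrank_leqif_sup (addsmxSl U W).
rewrite addsmx_sub submx_refl (negPf nWU) /= => ltU.
have := rank_leq_col (U + W)%MS; have := mxrank_sum_cap U W.
by move: ltU; rewrite rU rW; lia.
Qed.

(* If H_i and H_j do not cross, their intersection is not a crossing edge:
   any crossing pair cutting it out contains, hence equals, {i, j}. *)
Lemma cap2_not_crossing i j : i != j -> ~~ pitchfork H i j ->
  ~~ crossing_edge H (cap2 H i j).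
Proof.
move=> ij /negP npf; apply/existsP => -[a /existsP [b /andP [pab /eqmxP eq_ab]]].
apply: npf; have [_ /eqP above_ab] := andP pab.
have above_ij : [set k | (cap2 H i j <= H k)%MS] = [set a; b].
  by rewrite -above_ab; apply/setP => k; rewrite !inE eq_ab.
have iab : i \in [set a; b] by rewrite -above_ij inE capmxSl.
have jab : j \in [set a; b] by rewrite -above_ij inE capmxSr.
rewrite /pitchfork ij above_ij /=.
by move: iab jab ij; rewrite !inE => /orP[]/eqP-> /orP[]/eqP->;
  rewrite ?eqxx // setUC eqxx.
Qed.

End ArrangementFacts.

Section DefiningRelations.
Context {C : numClosedFieldType} {n : nat} {gT : finGroupType}
  {rho : gT -> 'M[C]_n} {Rs : {set gT}} {P : finType} {H : P -> 'M[C]_n}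
  {mu : gT -> C} {tau : P -> C}.
Local Notation X := (gT + P)%type.
Local Notation word := (lc_word C).
Local Notation rel := (B_rel rho H Rs mu tau).
Local Notation cong := (cong rel).
Implicit Types (a b : seq X) (v w : gT) (i j : P).

(* The defining relations of B_G(Υ), each read as a rewrite rule on words in
   an arbitrary context (a, b).  First T_1 = 1, which also serves as the
   relator padding empty ideal combinations. *)
Lemma rel_unit : rel (lc_sub (genT C P 1%g) (lc_one C X)).
Proof. by left. Qed.

Lemma cong_unit a b : cong (word (a ++ [:: inl 1%g] ++ b)) (word (a ++ b)).
Proof.
apply: (cong_word_rule a b (g := word [::]) rel_unit) => F.
by rewrite lc_eval_sub !lc_eval_word.
Qed.

Lemma rel_mul v w :
  rel (lc_sub (lc_mul (genT C P v) (genT C P w)) (genT C P (v * w)%g)).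
Proof. by right; left; exists v, w. Qed.

Lemma cong_mulT a b v w :
  cong (word (a ++ [:: inl v; inl w] ++ b)) (word (a ++ [:: inl (v * w)%g] ++ b)).
Proof.
apply: (cong_word_rule a b (g := genT C P (v * w)%g) (rel_mul v w)) => F.
by rewrite lc_eval_sub lc_eval_mul_words.
Qed.

Lemma cong_square a b i :
  cong (word (a ++ [:: inr i; inr i] ++ b))
       (lc_scale (tau i) (word (a ++ [:: inr i] ++ b))).
Proof.
apply: (cong_word_rule a b (g := lc_scale (tau i) (gene C gT i))).
  by do 4 right; left; exists i.
by move=> F; rewrite lc_eval_sub lc_eval_mul_words.
Qed.

Lemma cong_moveT a b w i j : maps_hyp rho H w j i ->
  cong (word (a ++ [:: inl w; inr j] ++ b)) (word (a ++ [:: inr i; inl w] ++ b)).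
Proof.
move=> wji; apply: (cong_word_rule a b (g := word [:: inr i; inl w])).
  by do 5 right; left; exists w, i, j.
by move=> F; rewrite lc_eval_sub !lc_eval_mul_words lc_eval_word.
Qed.

Lemma cong_comm a b i j : pitchfork H i j ->
  cong (word (a ++ [:: inr i; inr j] ++ b)) (word (a ++ [:: inr j; inr i] ++ b)).
Proof.
move=> pij; apply: (cong_word_rule a b (g := word [:: inr j; inr i])).
  by do 6 right; left; exists i, j.
by move=> F; rewrite lc_eval_sub !lc_eval_mul_words lc_eval_word.
Qed.

Lemma cong_absorb a b i j :
  [/\ i != j, noncrossing2 H (cap2 H i j) & Rij rho H Rs i j != set0] ->
  cong (word (a ++ [:: inr i; inr j] ++ b))
       (flatten [seq lc_scale (mu s) (word (a ++ [:: inl s; inr j] ++ b))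
                | s <- enum (Rij rho H Rs i j)]).
Proof.
move=> ncij; pose g := lc_mul (sumR rho H Rs mu i j) (gene C gT j).
apply: cong_trans (cong_word_rule a b (g := g) _ _) _.
- by do 7 right; left; exists i, j; split; [| left].
- by move=> F; rewrite lc_eval_sub lc_eval_mul_words.
apply: cong_ext => F; rewrite lc_eval_ctx lc_eval_mul /sumR big_flatten !big_map /=.
rewrite lc_eval_flatten; apply: eq_bigr => s _.
by rewrite big_seq1 lc_eval_word /lc_eval big_seq1.
Qed.

Lemma cong_kill a b i j :
  [/\ i != j, noncrossing2 H (cap2 H i j) & Rij rho H Rs i j == set0] ->
  cong (word (a ++ [:: inr i; inr j] ++ b)) [::].
Proof.
move=> ncij; apply: (cong_word_rule a b (g := [::])).
  by do 8 right; exists i, j.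
by move=> F; rewrite lc_eval_nil subr0 lc_eval_mul_words.
Qed.

End DefiningRelations.

Section GroupAlgebraEmbedding.
Context {C : numClosedFieldType} {n : nat} {gT : finGroupType}
  {rho : gT -> 'M[C]_n} {Rs : {set gT}} {P : finType} {H : P -> 'M[C]_n}
  {mu : gT -> C} {tau : P -> C}.
Local Notation X := (gT + P)%type.
Local Notation rel := (B_rel rho H Rs mu tau).

Fixpoint word_elt (x : seq X) : option gT :=
  match x with
  | [::] => Some 1%g
  | inl w :: y => omap (fun g => w * g)%g (word_elt y)
  | inr _ :: _ => None
  end.

Definition opt_mul (o o' : option gT) : option gT :=
  obind (fun g => omap (fun h => g * h)%g o') o.

Lemma word_elt_cat x y : word_elt (x ++ y) = opt_mul (word_elt x) (word_elt y).
Proof.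
elim: x => [|[w|i] x IH] /=; first by case: (word_elt y) => //= g; rewrite mul1g.
  by rewrite IH; case: (word_elt x) => //= g; case: (word_elt y) => //= h; rewrite mulgA.
by [].
Qed.

(* Every relator is killed by evaluating K ∘ word_elt when K None = 0: the
   relations hold in CG for T_w ↦ w, e_i ↦ 0. *)
Lemma relator_eval_elt (K : option gT -> C) r : K None = 0 -> rel r ->
  lc_eval (fun x => K (word_elt x)) r = 0.
Proof.
(* Only the relators T_1 - 1 and T_v T_w - T_(vw) have words free of e's,
   and they cancel as word_elt is multiplicative; all other words give 0. *)
move=> KN.
case=> [->|[[v [w ->]]|[[i [s [_ [->|->]]]]|[[i [w [_ [_ [->|->]]]]]|[[i ->]|
  [[w [i [j [_ ->]]]]|[[i [j [_ ->]]]|[[i [j [_ [->|->]]]]|[i [j [_ ->]]]]]]]]]]];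
  rewrite /lc_sub /lc_scale /lc_mul /genT /gene /lc_word /= /lc_eval /=
    ?big_cons ?big_nil /= ?KN ?mulr0 ?add0r ?addr0 ?subrr //.
- by rewrite mulg1 mulr1 mul1r mulN1r subrr.
- by rewrite !mulg1 !mulr1 mul1r mulN1r subrr.
- rewrite big1_seq // => q /andP[_ /mapP[p /flattenP[s /mapP[p' _ ->]]]].
  rewrite inE => /eqP -> -> /=; rewrite word_elt_cat.
  by case: (word_elt p'.2) => //=; rewrite KN mulr0.
- rewrite big1_seq // => q /andP[_ /mapP[p]]; rewrite cats0 => /mapP[p' _ -> ->] /=.
  by rewrite KN mulr0.
Qed.

Lemma relator_ctx_eval_elt (K : option gT -> C) u v r : K None = 0 -> rel r ->
  lc_eval (fun x => K (word_elt (u ++ x ++ v))) r = 0.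
Proof.
move=> KN rel_r; pose K' o := K (opt_mul (word_elt u) (opt_mul o (word_elt v))).
rewrite (lc_eval_ext _ (F' := fun x => K' (word_elt x))) => [|x]; last first.
  by rewrite /K' !word_elt_cat.
by apply: relator_eval_elt; rewrite // /K'; case: (word_elt u).
Qed.

(* Injectivity of CG → B_G(Υ): evaluate at the indicator of g ∈ G. *)
Lemma T_image_inj (a : gT -> C) :
  B_ideal rho H Rs mu tau (T_image P a) -> forall w, a w = 0.
Proof.
move=> /(in_idealP rel_unit) [l el] g.
pose K (o : option gT) : C := (o == Some g)%:R.
have := el (fun x => K (word_elt x)).
rewrite big1 => [|t _]; last by rewrite relator_ctx_eval_elt ?mulr0 //; case: t.2.
rewrite /lc_eval /T_image big_map (bigD1_seq g) ?mem_enum ?enum_uniq //=.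
rewrite mulg1 /K eqxx mulr1 big1_seq ?addr0 // => w /andP[wg _] /=.
by rewrite mulg1 (inj_eq Some_inj) (negPf wg) mulr0.
Qed.

End GroupAlgebraEmbedding.

Section NormalForms.
Variables (C : numClosedFieldType) (n : nat) (gT : finGroupType)
  (rho : mx_representation C [set: gT] n) (Rs : {set gT})
  (P : finType) (H : P -> 'M[C]_n) (mu : gT -> C) (tau : P -> C).
Hypothesis Rs_def : forall g : gT, g \in Rs <-> pseudo_refl (rho g).
Hypothesis H_refl : forall i : P, exists2 s, s \in Rs & (H i == fixsp (rho s))%MS.
Hypothesis H_all : forall s, s \in Rs -> exists i : P, (H i == fixsp (rho s))%MS.
Hypothesis H_inj : forall i j : P, (H i == H j)%MS -> i = j.

Local Notation X := (gT + P)%type.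
Local Notation lc := (lincomb C X).
Local Notation word := (lc_word C).
Local Notation cong := (cong (B_rel rho H Rs mu tau)).

Lemma rho_conj s w : rho (s ^ w^-1)%g = rho w *m rho s *m invmx (rho w).
Proof.
by rewrite conjgE invgK !repr_mxM ?inE // repr_mxV ?inE // mulmxA.
Qed.

Lemma hyperplane_image w j : exists i, maps_hyp rho H w j i.
Proof.
have [s sR Hj] := H_refl j.
have uw : rho w \in unitmx by rewrite repr_mx_unit ?inE.
have sR' : (s ^ w^-1)%g \in Rs.
  by apply/Rs_def; rewrite rho_conj; apply: pseudo_refl_conj => //; apply/Rs_def.
have [i Hi] := H_all sR'; exists i; apply/eqmxP.
have HjB := eqmxMr (rho w)^T (eqmxP Hj).
have fix_conj := eqmxP (fixsp_conj (rho s) uw).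
have Hi_conj := eqmxP Hi; rewrite rho_conj in Hi_conj.
exact: eqmx_trans HjB (eqmx_trans (eqmx_sym fix_conj) (eqmx_sym Hi_conj)).
Qed.

Lemma rank_hyperplane i : \rank (H i) = n.-1.
Proof.
have [s /Rs_def sR Hi] := H_refl i.
by rewrite (eqmx_rank Hi) rank_fixsp_pseudo_refl.
Qed.

Lemma noncrossing_cap i j : i != j -> ~~ pitchfork H i j ->
  noncrossing2 H (cap2 H i j).
Proof.
move=> ij npf; rewrite /noncrossing2 cap2_edge ?cap2_not_crossing //= andbT.
apply/eqP/rank_cap_hyperplanes; rewrite ?rank_hyperplane //.
apply/negP => Hji; have := mxrank_leqif_eq Hji; rewrite !rank_hyperplane => /leqifP.
case: ifP => [/H_inj ji _ | _]; last by rewrite ltnn.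
by move: ij; rewrite ji eqxx.
Qed.

Definition elist (S : {set P}) : seq P := [seq k <- enum P | k \in S].
Definition eword (l : seq P) : seq X := map inr l.
Definition normal_word (S : {set P}) (w : gT) : seq X := eword (elist S) ++ [:: inl w].
Definition crossing_set (S : {set P}) : Prop :=
  {in S &, forall a b, a != b -> pitchfork H a b}.
Definition normal_comb (g : lc) : Prop :=
  forall p, p \in g -> exists S w, crossing_set S /\ p.2 = normal_word S w.
Definition reducible (f : lc) : Prop := exists2 g, normal_comb g & cong f g.

Lemma reducible_cong g f : cong f g -> reducible g -> reducible f.
Proof. by move=> cfg [h nh cgh]; exists h => //; apply: cong_trans cfg cgh. Qed.

Lemma reducible_nil : reducible [::].
Proof. by exists [::] => //; apply: cong_refl. Qed.

Lemma reducible_normal S w : crossing_set S -> reducible (word (normal_word S w)).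
Proof.
move=> cS; exists (word (normal_word S w)); last exact: cong_refl.
by move=> p /[1!inE] /eqP->; exists S, w.
Qed.

Lemma reducible_cat f1 f2 : reducible f1 -> reducible f2 -> reducible (f1 ++ f2).
Proof.
move=> [g1 n1 c1] [g2 n2 c2]; exists (g1 ++ g2); last exact: cong_cat.
by move=> p /[1!mem_cat] /orP[/n1|/n2].
Qed.

Lemma reducible_scale c f : reducible f -> reducible (lc_scale c f).
Proof.
move=> [g ng cfg]; exists (lc_scale c g); last exact: cong_scale.
by move=> _ /mapP [p /ng [S [w [cS ->]]] ->]; exists S, w.
Qed.

Lemma reducible_flatten (T : eqType) (h : T -> lc) (l : seq T) :
  {in l, forall t, reducible (h t)} -> reducible (flatten (map h l)).
Proof.
elim: l => [|t l IH] red_l /=; first exact: reducible_nil.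
apply: reducible_cat; first by apply: red_l; rewrite mem_head.
by apply: IH => u ul; apply: red_l; rewrite inE ul orbT.
Qed.

Lemma mem_elist S k : (k \in elist S) = (k \in S).
Proof. by rewrite mem_filter mem_enum andbT. Qed.

Lemma elist_split S k : exists l1 l2,
  [/\ elist S = l1 ++ (if k \in S then [:: k] else [::]) ++ l2,
      elist (S :\ k) = l1 ++ l2 & elist (k |: S) = l1 ++ k :: l2].
Proof.
rewrite /elist; have kP : k \in enum P by rewrite mem_enum.
move: (enum_uniq P) kP; move: (enum P) => s us ks.
case/splitPr: ks us => l1 l2; rewrite cat_uniq /= => /and4P[_ /norP[kl1 _] kl2 _].
have off_k l (A : {set P}) : k \notin l ->
    [seq x <- l | x \in A :\ k] = [seq x <- l | x \in A] /\
    [seq x <- l | x \in k |: A] = [seq x <- l | x \in A].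
  move=> kl; split; apply: eq_in_filter => x xl; rewrite !inE;
    by case: eqP => // xk; rewrite -xk xl in kl.
have [off1 off1'] := off_k _ S kl1; have [off2 off2'] := off_k _ S kl2.
exists [seq x <- l1 | x \in S], [seq x <- l2 | x \in S].
rewrite !filter_cat /= off1 off1' off2 off2' !inE eqxx /=.
by split=> //; case: (k \in S).
Qed.

Lemma cong_to_end l1 m l2 t : {in l2, forall k, pitchfork H m k} ->
  cong (word (eword (l1 ++ m :: l2) ++ t)) (word (eword (l1 ++ l2 ++ [:: m]) ++ t)).
Proof.
elim: l2 l1 => [|k l2 IH] l1 cross; first exact: cong_refl.
have -> : eword (l1 ++ m :: k :: l2) ++ t = eword l1 ++ [:: inr m; inr k] ++ (eword l2 ++ t).
  by rewrite /eword map_cat -catA.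
apply: cong_trans (cong_comm _ _ (cross k (mem_head _ _))) _.
have -> : eword l1 ++ [:: inr k; inr m] ++ eword l2 ++ t =
          eword ((l1 ++ [:: k]) ++ m :: l2) ++ t by rewrite /eword !map_cat -!catA.
rewrite (_ : l1 ++ (k :: l2) ++ [:: m] = (l1 ++ [:: k]) ++ l2 ++ [:: m]);
  last by rewrite -catA.
by apply: IH => j jl; apply: cross; rewrite inE jl orbT.
Qed.

Lemma crossing_tail S k l1 l2 : crossing_set S -> k \in S ->
  elist (S :\ k) = l1 ++ l2 -> {in l2, forall j, pitchfork H k j}.
Proof.
move=> cS kS eSk j jl2; have : j \in elist (S :\ k) by rewrite eSk mem_cat jl2 orbT.
by rewrite mem_elist !inE => /andP[jk jS]; apply: cS; rewrite // eq_sym.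
Qed.

(* The three cases of e_S e_i T_w.  First i ∈ S: move e_i next to the new
   e_i and use e_i^2 = τ_i e_i. *)
Lemma reduce_repeat S i w : crossing_set S -> i \in S ->
  reducible (word (eword (elist S) ++ [:: inr i; inl w])).
Proof.
move=> cS iS; have [l1 [l2 [eS eSi _]]] := elist_split S i; rewrite iS /= in eS.
have cross := crossing_tail cS iS eSi.
rewrite eS; apply: reducible_cong (cong_to_end l1 _ cross) _.
have -> : eword (l1 ++ l2 ++ [:: i]) ++ [:: inr i; inl w] =
          eword (l1 ++ l2) ++ [:: inr i; inr i] ++ [:: inl w].
  by rewrite /eword !map_cat -!catA.
apply: reducible_cong (cong_square _ _ _) _; apply: reducible_scale.
have -> : eword (l1 ++ l2) ++ [:: inr i] ++ [:: inl w] =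
          eword (l1 ++ l2 ++ [:: i]) ++ [:: inl w] by rewrite /eword !map_cat -!catA.
apply: reducible_cong (cong_sym (cong_to_end l1 _ cross)) _.
by rewrite -eS; apply: reducible_normal.
Qed.

(* Some m ∈ S with H_m, H_i not crossing: e_m e_i is either 0 or
   Σ μ_s T_s e_i = Σ μ_s e_m T_s, and T_s T_w = T_(sw). *)
Lemma reduce_noncrossing S m i w : crossing_set S -> m \in S -> i \notin S ->
  ~~ pitchfork H m i -> reducible (word (eword (elist S) ++ [:: inr i; inl w])).
Proof.
move=> cS mS iS npf; have mi : m != i by apply: contraNneq iS => <-.
have [l1 [l2 [eS eSm _]]] := elist_split S m; rewrite mS /= in eS.
have cross := crossing_tail cS mS eSm.
rewrite eS; apply: reducible_cong (cong_to_end l1 _ cross) _.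
set a := eword (l1 ++ l2).
have -> : eword (l1 ++ l2 ++ [:: m]) ++ [:: inr i; inl w] =
          a ++ [:: inr m; inr i] ++ [:: inl w] by rewrite /a /eword !map_cat -!catA.
have nc := noncrossing_cap mi npf.
have [R0|Rn0] := eqVneq (Rij rho H Rs m i) set0.
  by apply: reducible_cong (cong_kill _ _ _) reducible_nil; rewrite R0 eqxx.
apply: reducible_cong (cong_absorb _ _ _) _; first by split.
apply: reducible_flatten => s; rewrite mem_enum inE => /andP[_ sim].
apply: reducible_scale; apply: reducible_cong (cong_moveT _ _ sim) _.
have -> : a ++ [:: inr m; inl s] ++ [:: inl w] =
          (a ++ [:: inr m]) ++ [:: inl s; inl w] ++ [::] by rewrite -!catA.
apply: reducible_cong (cong_mulT _ _ _ _) _.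
have -> : (a ++ [:: inr m]) ++ [:: inl (s * w)%g] ++ [::] =
          eword (l1 ++ l2 ++ [:: m]) ++ [:: inl (s * w)%g].
  by rewrite cats0 /a /eword !map_cat -!catA.
apply: reducible_cong (cong_sym (cong_to_end l1 _ cross)) _.
by rewrite -eS; apply: reducible_normal.
Qed.

(* H_i crosses every H_k, k ∈ S: e_S e_i = e_(S ∪ {i}). *)
Lemma reduce_extend S i w : crossing_set S -> i \notin S ->
  {in S, forall k, pitchfork H k i} ->
  reducible (word (eword (elist S) ++ [:: inr i; inl w])).
Proof.
move=> cS iS cross_i; have [l1 [l2 [eS _ eSi]]] := elist_split S i.
rewrite (negPf iS) /= in eS.
have cSi : crossing_set (i |: S).
  move=> x y; rewrite !inE => /predU1P[->|xS] /predU1P[->|yS]; rewrite ?eqxx // => xy.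
  - by rewrite pitchforkC cross_i.
  - exact: cross_i.
  - exact: cS xy.
have cross : {in l2, forall k, pitchfork H i k}.
  by move=> k kl2; rewrite pitchforkC cross_i // -mem_elist eS mem_cat kl2 orbT.
have -> : eword (elist S) ++ [:: inr i; inl w] = eword (l1 ++ l2 ++ [:: i]) ++ [:: inl w].
  by rewrite eS /eword !map_cat -!catA.
apply: reducible_cong (cong_sym (cong_to_end l1 _ cross)) _.
by rewrite -eSi; apply: reducible_normal.
Qed.

Lemma reduce_e S i w : crossing_set S ->
  reducible (word (eword (elist S) ++ [:: inr i; inl w])).
Proof.
move=> cS; have [iS|iS] := boolP (i \in S); first exact: reduce_repeat.
have [m /andP[mS npf]|cross_i] := pickP (fun k => (k \in S) && ~~ pitchfork H k i).
  exact: reduce_noncrossing npf.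
by apply: reduce_extend => // k kS; have := cross_i k; rewrite kS /= => /negbFE.
Qed.

Lemma reduce_letter S w y : crossing_set S ->
  reducible (word (normal_word S w ++ [:: y])).
Proof.
move=> cS; rewrite /normal_word -catA /= -[[:: inl w; y]]cats0.
case: y => [v | j].
  by apply: reducible_cong (cong_mulT _ _ _ _) _; rewrite cats0; apply: reducible_normal.
have [i wji] := hyperplane_image w j.
by apply: reducible_cong (cong_moveT _ _ wji) _; rewrite cats0; apply: reduce_e.
Qed.

Lemma reducible_mulr g y : normal_comb g -> reducible (lc_ctx [::] g [:: y]).
Proof.
elim: g => [|p g IH] ng; first exact: reducible_nil.
have [S [w [cS e]]] := ng p (mem_head _ _).
rewrite /lc_ctx map_cons -cat1s; apply: reducible_cat.
  apply: (reducible_cong (g := lc_scale p.1 (word (normal_word S w ++ [:: y])))).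
    by apply: cong_ext => F; rewrite lc_eval_scale lc_eval_word /lc_eval big_seq1 /= e.
  by apply: reducible_scale; apply: reduce_letter.
by apply: IH => q qg; apply: ng; rewrite inE qg orbT.
Qed.

(* Every word is reducible, by induction from the right; the empty word is
   T_1 = e_∅ T_1. *)
Lemma reducible_word x : reducible (word x).
Proof.
elim/last_ind: x => [|x y [g ng cxg]].
  apply: reducible_cong (cong_sym (cong_unit [::] [::])) _.
  have e0 : elist set0 = [::].
    by rewrite /elist (eq_filter (a2 := pred0)) ?filter_pred0 // => k; rewrite inE.
  by have := @reducible_normal set0 1%g; rewrite /normal_word e0; apply=> a b; rewrite inE.
rewrite -cats1; apply: reducible_cong (cong_ctx [::] [:: y] cxg) _.
exact: reducible_mulr.
Qed.

Lemma normal_word_inj S1 w1 S2 w2 :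
  normal_word S1 w1 = normal_word S2 w2 -> (S1, w1) = (S2, w2).
Proof.
rewrite /normal_word !cats1 => /rcons_inj [/(inj_map inr_inj) e ->].
by congr (_, _); apply/setP => k; rewrite -!mem_elist e.
Qed.

Lemma B_span_normal_words : B_findim rho H Rs mu tau.
Proof.
pose b (k : 'I_#|{: {set P} * gT}|) := normal_word (enum_val k).1 (enum_val k).2.
exists #|{: {set P} * gT}|, b => x.
have [g ng cxg] := reducible_word x.
exists (fun k => lc_coef g (b k)).
apply/(in_idealP rel_unit); apply: ideal_comb_ext cxg => F.
rewrite !lc_eval_sub; congr (_ - _).
have ub : uniq (map b (enum 'I_#|{: {set P} * gT}|)).
  rewrite map_inj_uniq ?enum_uniq // => k1 k2 /normal_word_inj.
  by rewrite -!surjective_pairing => /enum_val_inj.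
rewrite [RHS](lc_eval_coef F ub) => [|_ /mapP [p pg ->]]; last first.
  have [S [w [_ ->]]] := ng p pg; apply/mapP; exists (enum_rank (S, w)).
    by rewrite mem_enum.
  by rewrite /b enum_rankK.
by rewrite /lc_eval !big_map.
Qed.

End NormalForms.

(* Theorem 5.1. *)
Theorem theorem5p1
  (C : numClosedFieldType) (n : nat) (gT : finGroupType)
  (rho : mx_representation C [set: gT] n)
  (rho_faithful : mx_faithful rho)
  (rho_unitary : forall g : gT, unitary (rho g))
  (Rs : {set gT})
  (Rs_def : forall g : gT, g \in Rs <-> pseudo_refl (rho g))
  (G_gen : <<Rs>>%g = [set: gT])
  (P : finType) (H : P -> 'M[C]_n)
  (H_refl : forall i : P, exists2 s, s \in Rs & (H i == fixsp (rho s))%MS)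
  (H_all : forall s, s \in Rs -> exists i : P, (H i == fixsp (rho s))%MS)
  (H_inj : forall i j : P, (H i == H j)%MS -> i = j)
  (mu : gT -> C) (tau : P -> C)
  (mu_nz : forall s, s \in Rs -> mu s != 0)
  (mu_conj : forall s x, s \in Rs -> mu (s ^ x)%g = mu s)
  (tau_inv : forall i j, hyp_equiv rho H i j -> tau i = tau j) :
  B_findim rho H Rs mu tau
  /\ B_ideal rho H Rs mu tau (lc_sub (genT C P 1%g) (lc_one C (gT + P)%type))
  /\ (forall w1 w2 : gT,
        B_ideal rho H Rs mu tau
          (lc_sub (lc_mul (genT C P w1) (genT C P w2)) (genT C P (w1 * w2)%g)))
  /\ (forall a : gT -> C,
        B_ideal rho H Rs mu tau (T_image P a) -> forall w, a w = 0).
Proof.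
split; first exact: B_span_normal_words Rs_def H_refl H_all H_inj.
split; first exact/(in_idealP rel_unit)/ideal_comb_rel/rel_unit.
split; last exact: T_image_inj.
by move=> w1 w2; apply/(in_idealP rel_unit)/ideal_comb_rel/rel_mul.
Qed.
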